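(* Let $\mathrm{cleaf}_3:\mathbb{R}\to\mathbb{R}$ be the leaf function of basis $3$ and write $c=\mathrm{cleaf}_3(l)$. For every real $l$, $$\mathrm{cleaf}_3(2l)=\frac{2c^2+2c^4-1}{\sqrt{1+8c^2+8c^6-8c^8}}.$$
   Context: For a natural number $n$, the leaf function $\mathrm{cleaf}_n:\mathbb{R}\to\mathbb{R}$ is the solution of $\frac{\mathrm{d}^2r}{\mathrm{d}l^2}=-n\,r^{2n-1}$ with $r(0)=1$, $r'(0)=0$. *)

From Stdlib Require Import Reals.
From Coquelicot Require Import Coquelicot.
Open Scope R_scope.

(* r is the leaf function cleaf_n: a solution on all of R of
   r'' = -n r^(2n-1), r(0) = 1, r'(0) = 0.  (Such a solution exists and is
   unique, so quantifying over all such r characterizes cleaf_n.) *)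
Definition is_cleaf (n : nat) (r : R -> R) : Prop :=
  exists r' : R -> R,
    (forall x, is_derive r x (r' x)) /\
    (forall x, is_derive r' x (- INR n * r x ^ (2 * n - 1))) /\
    r 0 = 1 /\ r' 0 = 0.

(* A solution r of r'' = -3 r^5 with r(0) = 1, r'(0) = 0 satisfies
   r'^2 + r^6 = 1, so it stays in [-1, 1].  Both t |-> r(2t) and
   t |-> dup (r t), where dup c is the right-hand side of the formula, solve
   y'' = -12 y^5 with y(0) = 1, y'(0) = 0: for the second one the chain rule
   and the energy identity reduce this to a polynomial identity in c.  Both
   stay in [-1, 1], where y^5 is Lipschitz, so a Gronwall estimate on
   (y - z)^2 + (y' - z')^2 shows that they coincide. *)

From Stdlib Require Import Reals Lra Psatz.
From Coquelicot Require Import Coquelicot.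
Open Scope R_scope.

(* Rewrites the eta-expanded [Derive (fun t => f t) x] produced by auto_derive. *)
Lemma Derive_of_is_derive (f f' : R -> R) :
  (forall t, is_derive f t (f' t)) -> forall x, Derive (fun t => f t) x = f' x.
Proof. intros Hf x. apply is_derive_unique, Hf. Qed.

Lemma nonpos_derive_antitone (f f' : R -> R) :
  (forall t, is_derive f t (f' t)) -> (forall t, f' t <= 0) ->
  forall a b, a <= b -> f b <= f a.
Proof.
  intros Hf Hneg a b Hab.
  destruct (Req_dec a b) as [<- | Hne]; [lra |].
  destruct (MVT_cor2 f f' a b) as [c [Hc _]]; [lra | |].
  - intros c _. apply is_derive_Reals, Hf.
  - specialize (Hneg c). nra.
Qed.

Lemma zero_derive_const (f : R -> R) :
  (forall t, is_derive f t 0) -> forall t, f t = f 0.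
Proof.
  intros Hf t.
  assert (Hopp : forall t, is_derive (fun s => - f s) t 0).
  { intros s. auto_derive; [exists 0; apply Hf |].
    rewrite (Derive_of_is_derive _ _ Hf). ring. }
  pose proof (nonpos_derive_antitone f (fun _ => 0) Hf (fun _ => Rle_refl 0)) as Hdec.
  pose proof (nonpos_derive_antitone _ (fun _ => 0) Hopp (fun _ => Rle_refl 0))
    as Hinc; cbv beta in Hinc.
  destruct (Rle_dec 0 t).
  - specialize (Hdec 0 t). specialize (Hinc 0 t). lra.
  - specialize (Hdec t 0). specialize (Hinc t 0). lra.
Qed.

Lemma gronwall_zero_forward (d d' : R -> R) (K : R) :
  (forall t, is_derive d t (d' t)) -> (forall t, 0 <= d t) ->
  (forall t, d' t <= K * d t) -> d 0 = 0 ->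
  forall t, 0 <= t -> d t = 0.
Proof.
  intros Hd Hpos Hbound H0 t Ht.
  set (h := fun s => exp (- K * s) * d s).
  assert (Hh : forall s, is_derive h s (exp (- K * s) * (d' s - K * d s))).
  { intros s. unfold h. auto_derive; [exists (d' s); apply Hd |].
    rewrite (Derive_of_is_derive _ _ Hd). ring. }
  assert (Hle : h t <= h 0).
  { apply (nonpos_derive_antitone h _ Hh); [| exact Ht].
    intros s. pose proof (exp_pos (- K * s)). specialize (Hbound s). nra. }
  unfold h in Hle. rewrite H0, Rmult_0_r in Hle.
  pose proof (exp_pos (- K * t)). specialize (Hpos t). nra.
Qed.

Lemma gronwall_zero (d d' : R -> R) (K : R) :
  (forall t, is_derive d t (d' t)) -> (forall t, 0 <= d t) ->
  (forall t, Rabs (d' t) <= K * d t) -> d 0 = 0 ->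
  forall t, d t = 0.
Proof.
  intros Hd Hpos Hbound H0 t.
  destruct (Rle_dec 0 t) as [Ht | Ht].
  - apply (gronwall_zero_forward d d' K); auto.
    intros s. specialize (Hbound s). apply Rabs_le_between in Hbound. lra.
  - replace t with (- - t) by ring.
    apply (gronwall_zero_forward (fun s => d (- s)) (fun s => - d' (- s)) K);
      auto; [| | rewrite Ropp_0; exact H0 | lra].
    + intros s. auto_derive; [exists (d' (- s)); apply Hd |].
      rewrite (Derive_of_is_derive _ _ Hd). ring.
    + intros s. specialize (Hbound (- s)). apply Rabs_le_between in Hbound. lra.
Qed.

Lemma ode2_unique (f : R -> R) (S : R -> Prop) (K : R) (y y' z z' : R -> R) :
  0 <= K -> (forall a b, S a -> S b -> Rabs (f a - f b) <= K * Rabs (a - b)) ->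
  (forall t, is_derive y t (y' t)) -> (forall t, is_derive y' t (f (y t))) ->
  (forall t, is_derive z t (z' t)) -> (forall t, is_derive z' t (f (z t))) ->
  (forall t, S (y t)) -> (forall t, S (z t)) ->
  y 0 = z 0 -> y' 0 = z' 0 ->
  forall t, y t = z t.
Proof.
  intros K_ge0 f_lipschitz Hy Hy' Hz Hz' Sy Sz Hy0 Hy'0 t.
  set (d := fun s => (y s - z s) ^ 2 + (y' s - z' s) ^ 2).
  set (d' := fun s => 2 * (y s - z s) * (y' s - z' s)
                      + 2 * (y' s - z' s) * (f (y s) - f (z s))).
  assert (Hd : forall s, is_derive d s (d' s)).
  { intros s. unfold d, d'. auto_derive.
    - repeat split; eexists; eauto.
    - rewrite (Derive_of_is_derive _ _ Hy), (Derive_of_is_derive _ _ Hz),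
        (Derive_of_is_derive _ _ Hy'), (Derive_of_is_derive _ _ Hz').
      ring. }
  assert (Hbound : forall s, Rabs (d' s) <= (1 + K) * d s).
  { intros s. unfold d, d'.
    pose proof (f_lipschitz _ _ (Sy s) (Sz s)) as Hlip.
    set (a := y s - z s) in *. set (b := y' s - z' s).
    assert (Hab : Rabs (a * b) <= (a ^ 2 + b ^ 2) / 2).
    { rewrite Rabs_mult. pose proof (pow2_ge_0 (Rabs a - Rabs b)).
      rewrite <- (pow2_abs a), <- (pow2_abs b). nra. }
    assert (Hf : Rabs (b * (f (y s) - f (z s))) <= K * Rabs (a * b)).
    { rewrite !Rabs_mult. pose proof (Rabs_pos b). nra. }
    eapply Rle_trans; [apply Rabs_triang |].
    rewrite !Rmult_assoc, (Rabs_mult 2 (a * b)), (Rabs_mult 2 (b * _)),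
      (Rabs_pos_eq 2) by lra.
    nra. }
  assert (Hdt : d t = 0).
  { apply (gronwall_zero d d' (1 + K)); auto.
    - intros s. unfold d. pose proof (pow2_ge_0 (y s - z s)).
      pose proof (pow2_ge_0 (y' s - z' s)). lra.
    - unfold d. rewrite Hy0, Hy'0. ring. }
  unfold d in Hdt. pose proof (pow2_ge_0 (y t - z t)).
  pose proof (pow2_ge_0 (y' t - z' t)). nra.
Qed.

Lemma pow5_lipschitz (a b : R) :
  -1 <= a <= 1 -> -1 <= b <= 1 -> Rabs (a ^ 5 - b ^ 5) <= 5 * Rabs (a - b).
Proof.
  intros Ha Hb.
  assert (Hu : 0 <= a ^ 2 <= 1) by nra.
  assert (Hv : 0 <= b ^ 2 <= 1) by nra.
  assert (Hw : -1 <= a * b <= 1) by nra.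
  replace (a ^ 5 - b ^ 5)
    with ((a - b) * ((a ^ 2) ^ 2 + a ^ 2 * (a * b) + (a * b) ^ 2
                     + (a * b) * b ^ 2 + (b ^ 2) ^ 2)) by ring.
  rewrite Rabs_mult, Rmult_comm.
  apply Rmult_le_compat_r; [apply Rabs_pos |].
  apply Rabs_le. split; nra.
Qed.

Definition dup_num (c : R) : R := 2 * c ^ 2 + 2 * c ^ 4 - 1.
Definition dup_rad (c : R) : R := 1 + 8 * c ^ 2 + 8 * c ^ 6 - 8 * c ^ 8.
Definition dup (c : R) : R := dup_num c / sqrt (dup_rad c).

Definition dup1_num (c : R) : R :=
  12 * c * (1 + 2 * c ^ 2 + 6 * c ^ 4 - 4 * c ^ 6 + 4 * c ^ 8).
Definition dup1 (c : R) : R := dup1_num c / sqrt (dup_rad c) ^ 3.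

(* The two explicit polynomials are the derivatives of dup1_num and dup_rad. *)
Definition dup2_num (c : R) : R :=
  (12 + 72 * c ^ 2 + 360 * c ^ 4 - 336 * c ^ 6 + 432 * c ^ 8) * dup_rad c
  - 3 / 2 * dup1_num c * (16 * c + 48 * c ^ 5 - 64 * c ^ 7).
Definition dup2 (c : R) : R := dup2_num c / sqrt (dup_rad c) ^ 5.

Lemma is_derive_div_sqrt_pow (N D : R -> R) (k : nat) (x dN dD : R) :
  0 < D x -> is_derive N x dN -> is_derive D x dD ->
  is_derive (fun t => N t / sqrt (D t) ^ k) x
    ((dN * D x - INR k / 2 * N x * dD) / sqrt (D x) ^ (2 + k)).
Proof.
  intros HD HN HDd.
  assert (Hq : 0 < sqrt (D x)) by (apply sqrt_lt_R0, HD).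
  assert (Hqk : sqrt (D x) ^ k <> 0) by (apply pow_nonzero; lra).
  assert (Hderiv := is_derive_div _ _ x _ _ HN
                      (is_derive_pow _ k x _ (is_derive_sqrt D x dD HDd HD)) Hqk).
  replace ((dN * D x - INR k / 2 * N x * dD) / sqrt (D x) ^ (2 + k)) with
    ((dN * sqrt (D x) ^ k - N x * (INR k * (dD / (2 * sqrt (D x)))
                                   * sqrt (D x) ^ Init.Nat.pred k))
     / (sqrt (D x) ^ k) ^ 2); [exact Hderiv |].
  assert (Hq2 : D x = sqrt (D x) * sqrt (D x)) by (symmetry; apply sqrt_sqrt; lra).
  set (q := sqrt (D x)) in *. rewrite Hq2.
  destruct k as [| k].
  - simpl. field. lra.
  - rewrite S_INR. simpl. field. split; [apply pow_nonzero |]; lra.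
Qed.

Lemma is_derive_dup (c : R) : 0 < dup_rad c -> is_derive dup c (dup1 c).
Proof.
  intros Hrad.
  apply (is_derive_ext (fun t => dup_num t / sqrt (dup_rad t) ^ 1)).
  { intros t. unfold dup. now rewrite pow_1. }
  replace (dup1 c) with
    (((4 * c + 8 * c ^ 3) * dup_rad c
      - INR 1 / 2 * dup_num c * (16 * c + 48 * c ^ 5 - 64 * c ^ 7))
     / sqrt (dup_rad c) ^ (2 + 1)).
  - apply is_derive_div_sqrt_pow; [exact Hrad | |];
      unfold dup_num, dup_rad; auto_derive; auto; ring.
  - unfold dup1. f_equal. simpl (INR 1). unfold dup1_num, dup_num, dup_rad. field.
Qed.

Lemma is_derive_dup1 (c : R) : 0 < dup_rad c -> is_derive dup1 c (dup2 c).
Proof.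
  intros Hrad.
  replace (dup2 c) with
    (((12 + 72 * c ^ 2 + 360 * c ^ 4 - 336 * c ^ 6 + 432 * c ^ 8) * dup_rad c
      - INR 3 / 2 * dup1_num c * (16 * c + 48 * c ^ 5 - 64 * c ^ 7))
     / sqrt (dup_rad c) ^ (2 + 3)).
  - apply is_derive_div_sqrt_pow; [exact Hrad | |];
      unfold dup1_num, dup_rad; auto_derive; auto; ring.
  - unfold dup2, dup2_num. f_equal. simpl (INR 3). field.
Qed.

Lemma dup_ode_identity (c : R) : 0 < dup_rad c ->
  -3 * c ^ 5 * dup1 c + (1 - c ^ 6) * dup2 c = -12 * dup c ^ 5.
Proof.
  intros Hrad. unfold dup, dup1, dup2.
  assert (Hq : 0 < sqrt (dup_rad c)) by (apply sqrt_lt_R0, Hrad).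
  assert (Hq2 : sqrt (dup_rad c) ^ 2 = dup_rad c) by (apply pow2_sqrt; lra).
  set (q := sqrt (dup_rad c)) in *.
  assert (Hpoly : -3 * c ^ 5 * dup1_num c * dup_rad c + (1 - c ^ 6) * dup2_num c
                  = -12 * dup_num c ^ 5)
    by (unfold dup2_num, dup1_num, dup_num, dup_rad; field).
  apply (Rmult_eq_reg_r (q ^ 5)); [| apply pow_nonzero; lra].
  replace (-12 * (dup_num c / q) ^ 5 * q ^ 5) with (-12 * dup_num c ^ 5)
    by (field; lra).
  rewrite <- Hpoly, <- Hq2. field. lra.
Qed.

Lemma dup_rad_ge1 (c : R) : -1 <= c <= 1 -> 1 <= dup_rad c.
Proof.
  intros Hc. unfold dup_rad.
  assert (0 <= c ^ 2 <= 1) by nra.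
  assert (0 <= c ^ 6) by (replace (c ^ 6) with ((c ^ 3) ^ 2) by ring; apply pow2_ge_0).
  replace (8 * c ^ 6 - 8 * c ^ 8) with (8 * c ^ 6 * (1 - c ^ 2)) by ring. nra.
Qed.

Lemma dup_bounded (c : R) : -1 <= c <= 1 -> -1 <= dup c <= 1.
Proof.
  intros Hc. pose proof (dup_rad_ge1 c Hc) as Hrad.
  assert (Hq : 0 < sqrt (dup_rad c)) by (apply sqrt_lt_R0; lra).
  assert (Hgap : dup_rad c - dup_num c ^ 2 = 12 * c ^ 2 * (1 - c ^ 6))
    by (unfold dup_rad, dup_num; ring).
  assert (Hnum : Rabs (dup_num c) <= sqrt (dup_rad c)).
  { rewrite <- sqrt_Rsqr_abs. apply sqrt_le_1_alt. unfold Rsqr.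
    assert (0 <= c ^ 2 <= 1) by nra.
    assert (c ^ 6 <= 1) by (replace (c ^ 6) with ((c ^ 2) ^ 3) by ring;
                            rewrite <- (pow1 3); apply pow_incr; lra).
    nra. }
  apply Rabs_le_between in Hnum. unfold dup. split.
  - apply (Rmult_le_reg_r (sqrt (dup_rad c))); [exact Hq |].
    field_simplify; lra.
  - apply (Rmult_le_reg_r (sqrt (dup_rad c))); [exact Hq |].
    field_simplify; lra.
Qed.

Lemma dup_1 : dup 1 = 1.
Proof.
  unfold dup, dup_num, dup_rad.
  replace (1 + 8 * 1 ^ 2 + 8 * 1 ^ 6 - 8 * 1 ^ 8) with (3 * 3) by ring.
  rewrite sqrt_square by lra. field.
Qed.

Section QuinticLeaf.

Variables (r r' : R -> R).
Hypothesis r_deriv : forall t, is_derive r t (r' t).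
Hypothesis r'_deriv : forall t, is_derive r' t (-3 * r t ^ 5).
Hypothesis r_0 : r 0 = 1.
Hypothesis r'_0 : r' 0 = 0.

Lemma leaf_energy (t : R) : r' t ^ 2 + r t ^ 6 = 1.
Proof.
  rewrite (zero_derive_const (fun s => r' s ^ 2 + r s ^ 6)), r_0, r'_0; [ring |].
  intros s. auto_derive.
  - split; [exists (-3 * r s ^ 5) | split; [exists (r' s) |]]; auto.
  - rewrite (Derive_of_is_derive _ _ r_deriv), (Derive_of_is_derive _ _ r'_deriv). ring.
Qed.

Lemma leaf_bounded (t : R) : -1 <= r t <= 1.
Proof.
  pose proof (leaf_energy t) as HE.
  assert (Hr6 : r t ^ 6 <= 1) by (pose proof (pow2_ge_0 (r' t)); lra).
  assert (Hr2 : r t ^ 2 <= 1).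
  { destruct (Rle_dec (r t ^ 2) 1) as [| Hgt]; [assumption |].
    replace (r t ^ 6) with ((r t ^ 2) ^ 3) in Hr6 by ring.
    pose proof (Rlt_pow_R1 (r t ^ 2) 3 ltac:(lra) ltac:(lia)). lra. }
  nra.
Qed.

Lemma dup_leaf_rad_pos (t : R) : 0 < dup_rad (r t).
Proof. pose proof (dup_rad_ge1 _ (leaf_bounded t)). lra. Qed.

Lemma is_derive_doubled_leaf (t : R) :
  is_derive (fun s => r (2 * s)) t (2 * r' (2 * t)).
Proof.
  auto_derive; [exists (r' (2 * t)); auto |].
  rewrite (Derive_of_is_derive _ _ r_deriv). ring.
Qed.

Lemma is_derive_doubled_leaf' (t : R) :
  is_derive (fun s => 2 * r' (2 * s)) t (-12 * r (2 * t) ^ 5).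
Proof.
  auto_derive; [exists (-3 * r (2 * t) ^ 5); auto |].
  rewrite (Derive_of_is_derive _ _ r'_deriv). ring.
Qed.

Lemma is_derive_dup_leaf (t : R) :
  is_derive (fun s => dup (r s)) t (r' t * dup1 (r t)).
Proof.
  exact (is_derive_comp dup r t _ _ (is_derive_dup _ (dup_leaf_rad_pos t)) (r_deriv t)).
Qed.

Lemma is_derive_dup_leaf' (t : R) :
  is_derive (fun s => r' s * dup1 (r s)) t (-12 * dup (r t) ^ 5).
Proof.
  rewrite <- (dup_ode_identity _ (dup_leaf_rad_pos t)).
  replace ((1 - r t ^ 6) * dup2 (r t)) with (r' t * (r' t * dup2 (r t)))
    by (rewrite <- (leaf_energy t); ring).
  exact (is_derive_mult r' _ t _ _ (r'_deriv t)
           (is_derive_comp dup1 r t _ _ (is_derive_dup1 _ (dup_leaf_rad_pos t))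
              (r_deriv t))
           Rmult_comm).
Qed.

Lemma leaf_duplication (l : R) : r (2 * l) = dup (r l).
Proof.
  apply (ode2_unique (fun y => -12 * y ^ 5) (fun y => -1 <= y <= 1) 60
           (fun s => r (2 * s)) (fun s => 2 * r' (2 * s))
           (fun s => dup (r s)) (fun s => r' s * dup1 (r s))).
  - lra.
  - intros a b Ha Hb.
    replace (-12 * a ^ 5 - -12 * b ^ 5) with (12 * (b ^ 5 - a ^ 5)) by ring.
    rewrite Rabs_mult, (Rabs_pos_eq 12), Rabs_minus_sym by lra.
    pose proof (pow5_lipschitz a b Ha Hb). lra.
  - exact is_derive_doubled_leaf.
  - exact is_derive_doubled_leaf'.
  - exact is_derive_dup_leaf.
  - exact is_derive_dup_leaf'.
  - intros s. apply leaf_bounded.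
  - intros s. apply dup_bounded, leaf_bounded.
  - rewrite Rmult_0_r, r_0. symmetry. exact dup_1.
  - rewrite Rmult_0_r, r'_0. ring.
Qed.

End QuinticLeaf.

Theorem mainTheorem7 (cleaf3 : R -> R) (H : is_cleaf 3 cleaf3) (l : R) :
  cleaf3 (2 * l) =
  (2 * cleaf3 l ^ 2 + 2 * cleaf3 l ^ 4 - 1) /
    sqrt (1 + 8 * cleaf3 l ^ 2 + 8 * cleaf3 l ^ 6 - 8 * cleaf3 l ^ 8).
Proof.
  destruct H as [r' [Hr [Hr' [H0 H0']]]].
  apply (leaf_duplication cleaf3 r'); auto.
  intros t. replace (-3 * cleaf3 t ^ 5) with (- INR 3 * cleaf3 t ^ (2 * 3 - 1))
    by (simpl; ring).
  apply Hr'.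
Qed.
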